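(* For all $\alpha\in(0,\pi/2)$ and $\beta\in[0,\alpha]$, the function $g(r)=\frac{1+Ar}{\sqrt{1+r^2+Br}}$ is concave at $r=r_0(\alpha,\beta)$, i.e. $g''(r_0(\alpha,\beta))\le 0$.
   Context: For $\alpha\in(0,\pi/2)$ and $\beta\in[0,\alpha]$, let $A=\frac{2\tan\beta}{\tan\alpha+\tan\beta}$, $B=2\cos(2\alpha)$, and $r_0(\alpha,\beta)=\frac{2A-B}{2-AB}$ (the critical point of $g$). *)

From Stdlib Require Import Reals.
From Coquelicot Require Import Coquelicot.
Open Scope R_scope.

Definition A_ab (alpha beta : R) : R := 2 * tan beta / (tan alpha + tan beta).
Definition B_a (alpha : R) : R := 2 * cos (2 * alpha).

Definition g (alpha beta : R) (r : R) : R :=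
  (1 + A_ab alpha beta * r) / sqrt (1 + r ^ 2 + B_a alpha * r).

(* critical point r0(alpha,beta) = (2A - B)/(2 - AB) *)
Definition r0 (alpha beta : R) : R :=
  (2 * A_ab alpha beta - B_a alpha) / (2 - A_ab alpha beta * B_a alpha).

(** At a critical point the numerator of [g'] vanishes, so [g''] reduces to the
    derivative of that (affine) numerator times a positive factor.  Writing
    [g'(r) = ((A - B/2) + r (AB/2 - 1)) / (1 + r^2 + B r)^(3/2)], the critical
    point is [r0] and [g''(r0) = (AB/2 - 1) / (1 + r0^2 + B r0)^(3/2)], which is
    negative because [0 <= A <= 1] and [|B| < 2]. *)

From Stdlib Require Import Reals Lra Psatz.
From Coquelicot Require Import Coquelicot.
Open Scope R_scope.

Definition g_gen (a b r : R) : R := (1 + a * r) / sqrt (1 + r ^ 2 + b * r).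

Definition g_gen_num (a b r : R) : R := (a - b / 2) + r * (a * b / 2 - 1).

Definition g_gen_den (b r : R) : R :=
  / ((1 + r ^ 2 + b * r) * sqrt (1 + r ^ 2 + b * r)).

Lemma quad_pos (b r : R) : -2 < b < 2 -> 0 < 1 + r ^ 2 + b * r.
Proof.
  intros Hb.
  assert (0 <= (r + b / 2) * (r + b / 2)) by apply Rle_0_sqr.
  nra.
Qed.

Section Derivatives.
Variables a b : R.
Hypothesis Hb : -2 < b < 2.

Lemma g_gen_den_pos (r : R) : 0 < g_gen_den b r.
Proof.
  pose proof (quad_pos b r Hb) as HQ.
  pose proof (sqrt_lt_R0 _ HQ).
  apply Rinv_0_lt_compat, Rmult_lt_0_compat; assumption.
Qed.

Lemma is_derive_g_gen (r : R) :
  is_derive (g_gen a b) r (g_gen_num a b r * g_gen_den b r).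
Proof.
  pose proof (quad_pos b r Hb) as HQ.
  pose proof (sqrt_lt_R0 _ HQ) as HS.
  pose proof (sqrt_sqrt _ (Rlt_le _ _ HQ)) as HSS.
  unfold g_gen; auto_derive.
  - simpl in *; repeat split; lra.
  - unfold g_gen_num, g_gen_den; simpl in *.
    set (S := sqrt (1 + r * (r * 1) + b * r)) in *.
    rewrite <- HSS; clearbody S.
    transitivity ((a * (S * S) - (1 + a * r) * (r + b / 2)) / (S * S * S));
      [field; lra | rewrite HSS; field; lra].
Qed.

(* The vanishing numerator kills the term containing the derivative of
   [g_gen_den], which is never computed. *)
Lemma Derive_n2_g_gen_crit (x : R) : g_gen_num a b x = 0 ->
  Derive_n (g_gen a b) 2 x = (a * b / 2 - 1) * g_gen_den b x.
Proof.
  intros Hcrit; simpl.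
  rewrite (Derive_ext _ (fun r => g_gen_num a b r * g_gen_den b r));
    [| intros r; apply is_derive_unique, is_derive_g_gen].
  pose proof (quad_pos b x Hb) as HQ.
  pose proof (sqrt_lt_R0 _ HQ) as HS.
  apply is_derive_unique.
  replace ((a * b / 2 - 1) * g_gen_den b x) with
    ((a * b / 2 - 1) * g_gen_den b x + g_gen_num a b x * Derive (g_gen_den b) x)
    by (rewrite Hcrit; ring).
  apply (is_derive_mult (g_gen_num a b)).
  - unfold g_gen_num; auto_derive; [easy | ring].
  - apply Derive_correct; unfold g_gen_den; auto_derive.
    simpl in HQ, HS; repeat split; [lra |].
    apply Rmult_integral_contrapositive_currified; lra.
  - intros; apply Rmult_comm.
Qed.

End Derivatives.

Lemma g_gen_num_r0 (a b : R) : a * b < 2 ->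
  g_gen_num a b ((2 * a - b) / (2 - a * b)) = 0.
Proof. intros Hab; unfold g_gen_num; field; lra. Qed.

Lemma g_gen_concave_at_crit (a b : R) : a * b < 2 -> -2 < b < 2 ->
  Derive_n (g_gen a b) 2 ((2 * a - b) / (2 - a * b)) <= 0.
Proof.
  intros Hab Hb.
  rewrite (Derive_n2_g_gen_crit a b Hb _ (g_gen_num_r0 a b Hab)).
  pose proof (g_gen_den_pos b Hb ((2 * a - b) / (2 - a * b))).
  nra.
Qed.

Lemma A_ab_bounds (alpha beta : R) :
  0 < alpha < PI / 2 -> 0 <= beta <= alpha -> 0 <= A_ab alpha beta <= 1.
Proof.
  intros Hal Hbe.
  assert (Ht : 0 < tan alpha) by (apply tan_gt_0; lra).
  assert (Hs : 0 <= tan beta).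
  { destruct (Req_dec beta 0) as [-> |]; [rewrite tan_0; lra |].
    apply Rlt_le, tan_gt_0; lra. }
  assert (Hst : tan beta <= tan alpha).
  { destruct (Req_dec beta alpha) as [-> |]; [lra |].
    apply Rlt_le, tan_increasing; lra. }
  unfold A_ab; split.
  - apply Rmult_le_pos; [lra |].
    apply Rlt_le, Rinv_0_lt_compat; lra.
  - apply Rmult_le_reg_r with (tan alpha + tan beta); [lra |].
    field_simplify; lra.
Qed.

Lemma B_a_bounds (alpha : R) : 0 < alpha < PI / 2 -> -2 < B_a alpha < 2.
Proof.
  intros Hal; unfold B_a.
  assert (0 < sin (2 * alpha)) by (apply sin_gt_0; lra).
  pose proof (sin2_cos2 (2 * alpha)) as Hpyth; unfold Rsqr in Hpyth.
  nra.
Qed.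

Theorem lemma7 (alpha beta : R) :
  0 < alpha < PI / 2 -> 0 <= beta <= alpha ->
  Derive_n (g alpha beta) 2 (r0 alpha beta) <= 0.
Proof.
  intros Hal Hbe.
  pose proof (A_ab_bounds alpha beta Hal Hbe) as HA.
  pose proof (B_a_bounds alpha Hal) as HB.
  apply g_gen_concave_at_crit; [nra | exact HB].
Qed.
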